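(* Consider the discrete-time system $x_{k+1}=(I-\varepsilon\Delta)x_k+\varepsilon\pi A\psi(x_k)$, with $\varepsilon>0$, $\pi>0$, and each $\psi_i$ satisfying (A1)–(A4). If $x^*\neq0$ is an equilibrium point of this system, then $\pi>\pi_1=\frac{1}{1-\lambda_1(\mathcal L)}$.
   Context: Let $\mathcal G$ be an undirected, connected signed graph on $n$ nodes without self-loops, with symmetric adjacency matrix $A=[a_{ij}]$ having zero diagonal and entries of either sign. Let $\delta_i=\sum_j|a_{ij}|>0$, $\Delta=\mathrm{diag}(\delta_i)$, and $\mathcal L=I-\Delta^{-1}A$, with real eigenvalues $\lambda_1(\mathcal L)\le\dots\le\lambda_n(\mathcal L)$. Each $\psi_i:\mathbb R\to\mathbb R$ is smooth and satisfies: (A1) $\psi_i$ is odd; (A2) $\psi_i'>0$ everywhere and $\psi_i'(0)=1$; (A3) $\lim_{s\to\pm\infty}\psi_i(s)=\pm1$; (A4) $\psi_i$ is strictly convex for $s<0$ and strictly concave for $s>0$. Here $\psi(x)=(\psi_1(x_1),\dots,\psi_n(x_n))^T$. *)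

From HB Require Import structures.
From mathcomp Require Import all_boot all_order all_algebra.
From mathcomp Require Import all_classical all_reals all_analysis.
Set Implicit Arguments. Unset Strict Implicit. Unset Printing Implicit Defensive.
Import Order.TTheory GRing.Theory Num.Theory.
Import numFieldNormedType.Exports.
Local Open Scope classical_set_scope.
Local Open Scope ring_scope.

Definition smooth (R : realType) (f : R -> R) : Prop :=
  forall (k : nat) (x : R), derivable (derive1n k f) x 1.

Definition nonlin_A1_A4 (R : realType) (f : R -> R) : Prop :=
  smooth f /\
  (forall s, f (- s) = - f s) /\
  (forall s, 0 < derive1 f s) /\ derive1 f 0 = 1 /\
  (f s @[s --> +oo] --> (1 : R)) /\ (f s @[s --> -oo] --> (-1 : R)) /\
  (forall x y t : R, x < 0 -> y < 0 -> x != y -> 0 < t -> t < 1 ->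
     f (t * x + (1 - t) * y) < t * f x + (1 - t) * f y) /\
  (forall x y t : R, 0 < x -> 0 < y -> x != y -> 0 < t -> t < 1 ->
     t * f x + (1 - t) * f y < f (t * x + (1 - t) * y)).

Definition degw (R : realType) (n : nat) (A : 'M[R]_n) (i : 'I_n) : R :=
  \sum_(j < n) `|A i j|.

Definition DegMx (R : realType) (n : nat) (A : 'M[R]_n) : 'M[R]_n :=
  diag_mx (\row_i degw A i).

Definition sLap (R : realType) (n : nat) (A : 'M[R]_n) : 'M[R]_n :=
  1%:M - invmx (DegMx A) *m A.

Definition is_min_eigenvalue (R : realType) (n : nat) (M : 'M[R]_n) (lam : R) : Prop :=
  eigenvalue M lam /\ forall mu : R, eigenvalue M mu -> lam <= mu.

Definition signed_graph_ok (R : realType) (n : nat) (A : 'M[R]_n) : Prop :=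
  A^T = A /\ (forall i, A i i = 0) /\ (forall i, 0 < degw A i) /\
  (forall i j : 'I_n, connect (fun u v => A u v != 0) i j).

Definition psi_vec (R : realType) (n : nat) (psi : 'I_n -> R -> R) (x : 'cV[R]_n)
  : 'cV[R]_n := \col_i psi i (x i 0).

Definition step (R : realType) (n : nat) (A : 'M[R]_n) (psi : 'I_n -> R -> R)
  (eps pi : R) (x : 'cV[R]_n) : 'cV[R]_n :=
  (1%:M - eps *: DegMx A) *m x + (eps * pi) *: (A *m psi_vec psi x).

From HB Require Import structures.
From mathcomp Require Import all_boot all_order all_algebra.
From mathcomp Require Import all_classical all_reals all_analysis.
From mathcomp Require Import lra ring.
Import Order.TTheory GRing.Theory Num.Theory.
Import numFieldNormedType.Exports.
Set Implicit Arguments. Unset Strict Implicit. Unset Printing Implicit Defensive.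
Local Open Scope classical_set_scope.
Local Open Scope ring_scope.

(* A fixed point xs satisfies Delta xs = pi A psi(xs).  Put y := psi(xs)^T.  The
   nonlinearities obey the sector condition psi_i(s)^2 < psi_i(s) s for s <> 0,
   so  y Delta y^T < y Delta xs = pi y A y^T.  On the other hand the generalized
   Rayleigh quotient u A u^T / u Delta u^T attains a maximum mu on the compact
   ellipsoid u Delta u^T = 1, and a Lagrange-type argument shows that 1 - mu is
   an eigenvalue of L = I - Delta^-1 A; hence lambda_1 <= 1 - mu and
   y A y^T <= mu y Delta y^T.  Together, pi mu > 1 and pi > 1/mu >= 1/(1 - lambda_1). *)

Section QuadraticForm.
Variable R : realType.

Definition qform n (Q : 'M[R]_n) (u : 'rV[R]_n) : R := (u *m Q *m u^T) 0 0.

Lemma qform_sum n (Q : 'M[R]_n) u :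
  qform Q u = \sum_k (\sum_i u 0 i * Q i k) * u 0 k.
Proof. by rewrite /qform !mxE; apply: eq_bigr => k _; rewrite !mxE. Qed.

(* A quadratic form is a polynomial in the coordinates, hence continuous. *)
Lemma qform_continuous n (Q : 'M[R]_n) : continuous (qform Q).
Proof.
have -> : qform Q = fun u => \sum_k (\sum_i u 0 i * Q i k) * u 0 k.
  by apply: funext => u; exact: qform_sum.
apply: continuous_big => [|k _]; first exact: add_continuous.
move=> u; apply: continuousM; last exact: coord_continuous.
move: u; apply: continuous_big => [|i _]; first exact: add_continuous.
by move=> u; apply: continuousM; [exact: coord_continuous | exact: cst_continuous].
Qed.

Lemma qform_diag n (d u : 'rV[R]_n) : qform (diag_mx d) u = \sum_i d 0 i * u 0 i ^+ 2.
Proof.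
rewrite /qform mul_mx_diag !mxE; apply: eq_bigr => i _.
by rewrite !mxE mulrAC -expr2 mulrC.
Qed.

Lemma qform0 n (Q : 'M[R]_n) : qform Q 0 = 0.
Proof. by rewrite /qform !mul0mx mxE. Qed.

Lemma qformZ n (Q : 'M[R]_n) k u : qform Q (k *: u) = k ^+ 2 * qform Q u.
Proof.
by rewrite /qform -scalemxAl linearZ /= -scalemxAr -scalemxAl !mxE mulrA expr2.
Qed.

Lemma qform_lin n (D A : 'M[R]_n) mu u : qform (mu *: D - A) u = mu * qform D u - qform A u.
Proof. by rewrite /qform mulmxBr mulmxBl -scalemxAr -scalemxAl !mxE. Qed.

Lemma qform_line n (Q : 'M[R]_n) (v w : 'rV[R]_n) t : Q^T = Q ->
  qform Q (v + t *: w) = qform Q v + 2 * t * (v *m Q *m w^T) 0 0 + t ^+ 2 * qform Q w.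
Proof.
move=> symQ.
have swap : w *m Q *m v^T = v *m Q *m w^T.
  apply/matrixP => i j; rewrite !ord1.
  by rewrite -[in RHS](trmxK (v *m Q *m w^T)) [RHS]mxE !trmx_mul trmxK symQ mulmxA.
rewrite /qform linearD /= linearZ /= !mulmxDl !mulmxDr -!scalemxAl -!scalemxAr swap.
move: (v *m Q *m v^T) (v *m Q *m w^T) (w *m Q *m w^T) => X Y Z.
by rewrite !mxE; ring.
Qed.

Lemma qform_diag_gt0 n (d u : 'rV[R]_n) : (forall i, 0 < d 0 i) -> u != 0 ->
  0 < qform (diag_mx d) u.
Proof.
move=> d_gt0 /rV0Pn [i ui]; rewrite qform_diag (bigD1 i) //=.
rewrite ltr_pwDl ?sumr_ge0 // => [|j _].
  by rewrite mulr_gt0 ?d_gt0 // exprn_even_gt0 ?ui ?orbT.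
by rewrite mulr_ge0 ?sqr_ge0 // (ltW (d_gt0 j)).
Qed.

Lemma psd_qform_kernel n (Q : 'M[R]_n) (v : 'rV[R]_n) : Q^T = Q ->
  (forall u, 0 <= qform Q u) -> qform Q v = 0 -> v *m Q = 0.
Proof.
move=> symQ psdQ Qv0; apply/rowP => j; rewrite [RHS]mxE.
pose w : 'rV[R]_n := delta_mx 0 j.
have -> : (v *m Q) 0 j = (v *m Q *m w^T) 0 0 by rewrite trmx_delta -colE [RHS]mxE.
set b := (v *m Q *m w^T) 0 0; set a := qform Q w.
have a_ge0 : 0 <= a by exact: psdQ.
(* Along v - b/(a+1) w the form equals -b^2 (a+2)/(a+1)^2, forcing b = 0. *)
pose t := - b / (a + 1).
have tb : b = - (t * (a + 1)) by rewrite /t mulrVK ?opprK // unitfE gt_eqF //; lra.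
have := psdQ (v + t *: w); rewrite qform_line // Qv0 -/a -/b tb => h.
have : t ^+ 2 * (a + 2) <= 0 by nra.
have -> : t = 0 by nra.
by rewrite mul0r oppr0.
Qed.

End QuadraticForm.

Section GeneralizedRayleigh.
Variables (R : realType) (n : nat) (d : 'rV[R]_n).
Hypothesis d_gt0 : forall i, 0 < d 0 i.
Let D := diag_mx d.

Definition ellipsoid : set 'rV[R]_n := [set u | qform D u = 1].

Lemma normalize_in_ellipsoid u : u != 0 -> ellipsoid ((Num.sqrt (qform D u))^-1 *: u).
Proof.
move=> /(qform_diag_gt0 d_gt0) Du_gt0.
by rewrite /ellipsoid /= qformZ exprVn (sqr_sqrtr (ltW Du_gt0)) mulVf ?gt_eqF.
Qed.

Lemma ellipsoid_coord u j : ellipsoid u -> u 0 j ^+ 2 <= (d 0 j)^-1.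
Proof.
rewrite /ellipsoid /= qform_diag => Du1.
have dj_u2 : d 0 j * u 0 j ^+ 2 <= 1.
  rewrite -Du1 (bigD1 j) //= lerDl sumr_ge0 // => i _.
  by rewrite mulr_ge0 ?sqr_ge0 // (ltW (d_gt0 i)).
by rewrite -(ler_pM2l (d_gt0 j)) mulfV ?gt_eqF.
Qed.

(* Closed (preimage of a point) and bounded (coordinatewise), hence compact. *)
Lemma ellipsoid_compact : compact ellipsoid.
Proof.
apply: bounded_closed_compact; last first.
  apply: (@preimage_closed _ _ (qform D) [set 1]); last exact: closed_eq.
  by move=> u _; exact: qform_continuous.
pose B := 1 + \sum_k (d 0 k)^-1.
have inv_ge0 k : 0 <= (d 0 k)^-1 by rewrite invr_ge0 (ltW (d_gt0 k)).
have sum_ge0 : 0 <= \sum_k (d 0 k)^-1 by exact: sumr_ge0.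
apply: filterS (nbhs_pinfty_ge (r := B) _); last by rewrite num_real.
move=> M BM u Eu /=; rewrite [`|u|]/Num.norm /= mx_normrE; apply: bigmax_le.
  by apply: le_trans BM; rewrite /B; lra.
move=> [i j] _ /=; rewrite (ord1 i); apply: le_trans BM.
have uj2 : u 0 j ^+ 2 <= B.
  apply: (le_trans (ellipsoid_coord j Eu)); rewrite /B ler_wpDl // (bigD1 j) //=.
  by rewrite lerDl sumr_ge0.
(* |u_j| <= max(1, u_j^2) <= B since B >= 1. *)
have [uj_le1|uj_gt1] := leP `|u 0 j| 1; first by rewrite /B; lra.
apply: le_trans uj2; rewrite -real_normK ?num_real // expr2 ler_pMr //; lra.
Qed.

Lemma rayleigh_max (A : 'M[R]_n) (y : 'rV[R]_n) : y != 0 ->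
  exists2 v, qform D v = 1 & forall u, qform A u <= qform A v * qform D u.
Proof.
move=> y0.
have E0 : ellipsoid !=set0.
  by exists ((Num.sqrt (qform D y))^-1 *: y); exact: normalize_in_ellipsoid.
have Acont : {within ellipsoid, continuous (qform A)}.
  by apply: continuous_subspaceT; exact: qform_continuous.
have [v /set_mem Ev v_max] := compact_EVT_max E0 ellipsoid_compact Acont.
exists v => // u; have [->|u0] := eqVneq u 0; first by rewrite !qform0 mulr0.
have Du_gt0 := qform_diag_gt0 d_gt0 u0.
have := v_max _ (mem_set (normalize_in_ellipsoid u0)).
by rewrite qformZ exprVn (sqr_sqrtr (ltW Du_gt0)) mulrC ler_pdivrMr.
Qed.

Lemma rayleigh_eigenvalue (A : 'M[R]_n) (y : 'rV[R]_n) : A^T = A -> y != 0 ->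
  exists mu, eigenvalue (1%:M - invmx D *m A) (1 - mu) /\ qform A y <= mu * qform D y.
Proof.
move=> symA y0; have [v Dv1 v_max] := rayleigh_max A y0.
exists (qform A v); split; last exact: v_max.
set mu := qform A v in v_max *.
have symQ : (mu *: D - A)^T = mu *: D - A.
  by rewrite linearB /= linearZ /= tr_diag_mx symA.
have psdQ u : 0 <= qform (mu *: D - A) u by rewrite qform_lin subr_ge0.
have Qv0 : qform (mu *: D - A) v = 0 by rewrite qform_lin Dv1 mulr1 subrr.
have vA : v *m A = mu *: (v *m D).
  apply/esym/eqP; rewrite -subr_eq0 scalemxAr -mulmxBr.
  by rewrite (psd_qform_kernel symQ psdQ Qv0).
have Dunit : D \in unitmx.
  by rewrite unitmxE det_diag unitfE; apply/prodf_neq0 => i _; rewrite gt_eqF.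
apply/eigenvalueP; exists (v *m D).
  by rewrite mulmxBr mulmx1 mulmxA -(mulmxA v) mulmxV // mulmx1 vA scalerBl scale1r.
apply/eqP => vD0; move: Dv1.
by rewrite -(mulmxK Dunit v) vD0 mul0mx qform0 => /esym/eqP; rewrite oner_eq0.
Qed.

End GeneralizedRayleigh.

Lemma below_two_pos (R : realFieldType) (a b : R) : 0 < a -> 0 < b ->
  exists u, [/\ 0 < u, u < a & u < b].
Proof.
move=> a_gt0 b_gt0; have [ab|ba] := leP a b.
  by exists (a / 2); split; lra.
by exists (b / 2); split; lra.
Qed.

Section NearZero.
Variables (R : realType) (g : R -> R).

Lemma continuous0_lower_bound : {for 0, continuous g} -> g 0 = 0 ->
  forall m, 0 < m -> exists2 d, 0 < d & forall u, 0 < u -> u < d -> - m < g u.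
Proof.
move=> g_cont g0 m m_gt0.
have [d d_gt0 near_g] :=
  (nbhs_ballP 0 _).1 (@cvgr_dist_lt _ _ _ (nbhs 0) _ g (g 0) g_cont m m_gt0).
exists d => // u u_gt0 ud.
have := near_g u; rewrite -ball_normE /= sub0r normrN gtr0_norm // g0 sub0r normrN.
by move=> /(_ ud); rewrite ltr_norml => /andP[].
Qed.

Lemma derivable0_slope_lt : derivable g 0 1 -> g 0 = 0 ->
  forall k, derive1 g 0 < k -> exists2 d, 0 < d & forall h, 0 < h -> h < d -> g h < k * h.
Proof.
move=> /cvg_ex [l gl] g0 k dg_lt.
have dgl : derive1 g 0 = l by rewrite derive1E /derive (cvg_lim _ gl).
have e_gt0 : 0 < k - l by rewrite subr_gt0 -dgl.
have := @cvgr_dist_lt _ _ _ (0^') _ _ l gl _ e_gt0.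
rewrite near_withinE => /(_ (dnbhs_filter 0)) near_q.
have [d d_gt0 {}near_q] := (nbhs_ballP 0 _).1 near_q; exists d => // h h_gt0 hd.
have := near_q h; rewrite -ball_normE /= sub0r normrN gtr0_norm // => /(_ hd (lt0r_neq0 h_gt0)).
rewrite /shift /= g0 subr0 addr0 [h%:A]mulr1 ltr_norml => /andP[q_lt _].
move: q_lt; rewrite -[h^-1 *: g h]/(h^-1 * g h) => q_lt.
by rewrite -ltr_pdivrMr // mulrC; lra.
Qed.

End NearZero.

Section Sector.
Variables (R : realType) (f : R -> R).
Hypothesis f_ok : nonlin_A1_A4 f.

Lemma A1A4_derivable x : derivable f x 1.
Proof. by case: f_ok => smooth_f _; exact: (smooth_f 0%N x). Qed.

Lemma A1A4_continuous : continuous f.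
Proof. by move=> x; apply/differentiable_continuous/derivable1_diffP/A1A4_derivable. Qed.

Lemma A1A4_at0 : f 0 = 0.
Proof. by case: f_ok => _ [odd_f _]; have := odd_f 0; rewrite oppr0; lra. Qed.

Lemma A1A4_increasing x y : x < y -> f x < f y.
Proof.
case: f_ok => _ [_ [df_gt0 _]] xy.
apply: (@gtr0_derive1_lt_cc _ f x y) => //; rewrite ?in_itv /= ?lexx ?(ltW xy) //.
- by move=> z _; exact: A1A4_derivable.
- by apply: continuous_subspaceT; exact: A1A4_continuous.
Qed.

(* Strict concavity on (0, oo), written without convex weights. *)
Lemma A1A4_concave u t s : 0 < u -> u < t -> t < s ->
  (s - t) * f u + (t - u) * f s < (s - u) * f t.
Proof.
case: f_ok => _ [_ [_ [_ [_ [_ [_ concave_f]]]]]] u_gt0 ut ts.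
have su_gt0 : 0 < s - u by lra.
pose lam := (s - t) / (s - u).
have lam_su : lam * (s - u) = s - t by rewrite /lam divfK ?gt_eqF.
have lam_gt0 : 0 < lam by rewrite divr_gt0 //; lra.
have lam_lt1 : lam < 1 by rewrite ltr_pdivrMr //; lra.
have := concave_f u s lam u_gt0 (lt_trans u_gt0 (lt_trans ut ts))
  (negbT (lt_eqF (lt_trans ut ts))) lam_gt0 lam_lt1.
have -> : lam * u + (1 - lam) * s = t by rewrite mulrBl mul1r; lra.
by rewrite -(ltr_pM2l su_gt0); nra.
Qed.

Lemma A1A4_chord t s : 0 < t -> t < s -> f s * t <= f t * s.
Proof.
move=> t_gt0 ts; rewrite leNgt; apply/negP => chord_above.
have s_gt0 : 0 < s by lra.
pose m := f s * t - f t * s.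
have m_gt0 : 0 < m by rewrite subr_gt0.
have g_cont : {for 0, continuous (fun u => f u * s - f s * u)}.
  apply: continuousB; first by apply: continuousM; [exact: A1A4_continuous | exact: cst_continuous].
  by apply: continuousM; [exact: cst_continuous | exact: cvg_id].
have g0 : (fun u => f u * s - f s * u) 0 = 0 by rewrite /= A1A4_at0 mul0r mulr0 subr0.
have [d d_gt0 g_lower] := continuous0_lower_bound g_cont g0 m_gt0.
(* Concavity between a small u and s then pushes f t above its own value. *)
have [u [u_gt0 ud ut]] := below_two_pos d_gt0 t_gt0.
have := g_lower u u_gt0 ud; have := A1A4_concave u_gt0 ut ts.
rewrite /m; nra.
Qed.

Lemma A1A4_chord_strict t s : 0 < t -> t < s -> f s * t < f t * s.
Proof.
move=> t_gt0 ts.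
have ht_gt0 : 0 < t / 2 by lra.
have ht_t : t / 2 < t by lra.
(* Apply the weak inequality at t/2 and concavity between t/2 and s. *)
have := A1A4_chord ht_gt0 (lt_trans ht_t ts).
have := A1A4_concave ht_gt0 ht_t ts.
have s_gt0 : 0 < s by lra.
nra.
Qed.

(* Combined with f'(0) = 1, the chord inequality forces f s <= s. *)
Lemma A1A4_le_id s : 0 < s -> f s <= s.
Proof.
move=> s_gt0; rewrite leNgt; apply/negP => s_lt_fs.
have k_gt1 : 1 < f s / s by rewrite ltr_pdivlMr // mul1r.
have df0 : derive1 f 0 < f s / s by case: f_ok => _ [_ [_ [-> _]]].
have [d d_gt0 f_below] := derivable0_slope_lt (A1A4_derivable (x := 0)) A1A4_at0 df0.
have [h [h_gt0 hd hs]] := below_two_pos d_gt0 s_gt0.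
have fh_lt : f h * s < f s * h.
  by rewrite -ltr_pdivlMr // -mulrAC; exact: f_below.
by move: (A1A4_chord h_gt0 hs) => /(lt_le_trans fh_lt); rewrite ltxx.
Qed.

Lemma A1A4_sector s : 0 < s -> 0 < f s < s.
Proof.
move=> s_gt0; apply/andP; split.
  by have := A1A4_increasing s_gt0; rewrite A1A4_at0.
have hs_gt0 : 0 < s / 2 by lra.
have hs_s : s / 2 < s by lra.
have chord := A1A4_chord_strict hs_gt0 hs_s.
have := lt_le_trans chord (ler_wpM2r (ltW s_gt0) (A1A4_le_id hs_gt0)).
by rewrite [s / 2 * s]mulrC ltr_pM2r.
Qed.

(* By oddness the sector condition gives f(s)^2 < f(s) s for every s != 0. *)
Lemma A1A4_sector_sq s : s != 0 -> f s ^+ 2 < f s * s.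
Proof.
move=> s_neq0; rewrite expr2.
have [s_gt0|s_lt0] := ltP 0 s.
  by have /andP[fs_gt0 fs_lt] := A1A4_sector s_gt0; rewrite ltr_pM2l.
have ns_gt0 : 0 < - s by rewrite oppr_gt0 lt_neqAle s_neq0.
have := A1A4_sector ns_gt0; case: f_ok => _ [-> _].
rewrite oppr_gt0 ltrN2 => /andP[fs_lt0 s_lt_fs].
by rewrite ltr_nM2l.
Qed.

End Sector.

Lemma equilibrium_balance (R : realType) n (A : 'M[R]_n) psi eps pi x :
  0 < eps -> step A psi eps pi x = x -> DegMx A *m x = pi *: (A *m psi_vec psi x).
Proof.
rewrite /step mulmxBl mul1mx -scalemxAl => eps_gt0.
move: (DegMx A *m x) (A *m psi_vec psi x) => Dx Ap /matrixP fixed.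
apply/matrixP => i j; have := fixed i j; rewrite !mxE => eq_ij.
by apply: (mulfI (lt0r_neq0 eps_gt0)); lra.
Qed.

Lemma sector_energy (R : realType) n (d : 'rV[R]_n) (x p : 'cV[R]_n) :
  (forall i, 0 < d 0 i) -> (forall i, p i 0 ^+ 2 <= p i 0 * x i 0) ->
  forall i0, p i0 0 ^+ 2 < p i0 0 * x i0 0 ->
  qform (diag_mx d) p^T < (p^T *m diag_mx d *m x) 0 0.
Proof.
move=> d_gt0 sector i0 sector_i0; rewrite qform_diag mul_mx_diag !mxE.
rewrite (bigD1 i0) //= [ltRHS](bigD1 i0) //= !mxE.
apply: ltr_leD; first by rewrite mulrAC [_ * d 0 i0]mulrC ltr_pM2l.
apply: ler_sum => i _; rewrite !mxE mulrAC [_ * d 0 i]mulrC.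
by apply: ler_wpM2l; [exact: ltW | exact: sector].
Qed.

Lemma gain_bound (R : realFieldType) (G F pi mu lam : R) :
  0 < G -> 0 < pi -> G < pi * F -> F <= mu * G -> lam <= 1 - mu -> 1 / (1 - lam) < pi.
Proof.
move=> G_gt0 pi_gt0 G_lt F_le lam_le.
have piF_le : pi * F <= pi * (mu * G) by rewrite ler_pM2l.
have pimu_gt1 : 1 < pi * mu.
  by rewrite -(ltr_pM2r G_gt0) mul1r -mulrA (lt_le_trans G_lt piF_le).
have mu_gt0 : 0 < mu by rewrite -(pmulr_rgt0 _ pi_gt0) (lt_trans ltr01 pimu_gt1).
have lam_lt1 : 0 < 1 - lam by lra.
rewrite ltr_pdivrMr // (lt_le_trans pimu_gt1) //.
by rewrite ler_pM2l //; lra.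
Qed.

Theorem lemma3 (R : realType) (n : nat) (A : 'M[R]_n) (psi : 'I_n -> R -> R)
  (eps pi lam1 : R) (xs : 'cV[R]_n) :
  signed_graph_ok A ->
  (forall i, nonlin_A1_A4 (psi i)) ->
  0 < eps -> 0 < pi ->
  is_min_eigenvalue (sLap A) lam1 ->
  step A psi eps pi xs = xs ->
  xs != 0 ->
  pi > 1 / (1 - lam1).
Proof.
move=> [symA [_ [deg_gt0 _]]] psi_ok eps_gt0 pi_gt0 [_ lam1_min] fixed xs_neq0.
pose d : 'rV[R]_n := \row_i degw A i.
have d_gt0 i : 0 < d 0 i by rewrite mxE.
set p := psi_vec psi xs; pose y := p^T.
have p_sector i : p i 0 ^+ 2 <= p i 0 * xs i 0.
  rewrite mxE; have [->|xi_neq0] := eqVneq (xs i 0) 0.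
    by rewrite (A1A4_at0 (psi_ok i)) expr2 !mul0r.
  exact/ltW/(A1A4_sector_sq (psi_ok i)).
have /cV0Pn [i0 xi0_neq0] := xs_neq0.
have p_sector_i0 : p i0 0 ^+ 2 < p i0 0 * xs i0 0.
  by rewrite mxE; exact: (A1A4_sector_sq (psi_ok i0)).
have y_neq0 : y != 0.
  apply/rV0Pn; exists i0; rewrite mxE; apply: contraTneq p_sector_i0 => ->.
  by rewrite expr2 !mul0r ltxx.
have energy : qform (DegMx A) y < pi * qform A y.
  have -> : pi * qform A y = (y *m DegMx A *m xs) 0 0.
    rewrite -mulmxA (equilibrium_balance eps_gt0 fixed) -scalemxAr.
    by rewrite /qform /y trmxK mulmxA -/p [RHS]mxE.
  by have := sector_energy d_gt0 p_sector p_sector_i0.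
have [mu [eig_mu rayleigh]] := rayleigh_eigenvalue d_gt0 symA y_neq0.
exact: gain_bound (qform_diag_gt0 d_gt0 y_neq0) pi_gt0 energy rayleigh (lam1_min _ eig_mu).
Qed.
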